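(* Let $q\ge2$ be an integer and $d$ an even positive integer. Then the network $\mathcal{N}_1$ (with parameter $q$) has a $d$-dimensional VLNC solution over every finite field.
   Context: Vector linear network coding: each source $v$ generates $x_v\in F^d$; an edge out of a source $v$ carries $Ax_v$ for a $d\times d$ matrix $A$ over $F$; an edge out of an intermediate node carries $\sum A_{e',e}y_{e'}$ over the edges $e'$ entering that node; a terminal computes vectors $\sum B_ey_e$ over its incoming edges; a $d$-dimensional VLNC solution over $F$ is such a code with which every terminal computes each demanded message for all message choices. The Char-$q$-$s$ network (integer $q\ge2$): sources $s,x_1,\dots,x_{q+2}$; intermediate nodes $m_1,\dots,m_{q+3},n_1,\dots,n_{q+3}$; terminals $r_1,\dots,r_{q+3}$; edges: $(x_1,m_i)$ for $1\le i\le q+1$; $(s,m_1)$ and $(s,m_i)$ for $4\le i\le q+3$; $(x_i,m_j)$ for $2\le i,j\le q+2$, $i\ne j$; $(x_i,m_{q+3})$ for $1\le i\le q+2$; $e_i=(m_i,n_i)$ for $1\le i\le q+3$; $(n_i,r_i)$ for $1\le i\le q+2$; $(n_{q+3},r_i)$ and $(n_i,r_{q+3})$ for $1\le i\le q+2$; $(x_i,r_1)$ for $2\le i\le q+1$; $(x_1,r_{q+2})$; $(s,r_2)$; $(s,r_3)$. Demands: $r_1$ demands $x_{q+2}$; $r_i$ demands $x_i$ for $2\le i\le q+2$; $r_{q+3}$ demands $x_1$; no terminal demands $s$. The M-network: sources $a,b,x,y$; intermediate nodes $u_1,u_2,v_1,v_2,v_3$; terminals $t_1,\dots,t_4$; edges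 $(a,u_1),(b,u_1),(x,u_2),(y,u_2),(u_1,v_1),(u_1,v_3),(u_2,v_2),(u_2,v_3)$ and $(v_i,t_j)$ for $i=1,2,3$, $j=1,\dots,4$; demands: $t_1$ demands $a,x$; $t_2$ demands $a,y$; $t_3$ demands $b,x$; $t_4$ demands $b,y$. The network $\mathcal{N}_1$ is obtained from the disjoint union of the M-network and the Char-$q$-$s$ network by identifying source $x_1$ with $a$ and source $s$ with $y$ (so $a$ gets all edges out of $x_1$ and $y$ gets all edges out of $s$; terminal $r_{q+3}$ now demands $a$), and adding one new edge $(n_1,t_4)$. All other demands are unchanged. *)

From HB Require Import structures.
From mathcomp Require Import all_boot all_order all_algebra.
Set Implicit Arguments. Unset Strict Implicit. Unset Printing Implicit Defensive.
Import GRing.Theory.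
Local Open Scope ring_scope.

Record network := Network {
  node : eqType;
  nodes : seq node;
  source : pred node;
  edge : rel node;
  demand : rel node
}.
Arguments nodes : clear implicits.
Arguments source : clear implicits.
Arguments edge : clear implicits.
Arguments demand : clear implicits.

(* A d-dimensional vector linear network coding solution over F.
   - A u v        : the d x d matrix on the edge (u,v) out of a source u
                    (edge carries A u v *m x_u);
   - C w u v      : the coefficient matrix A_{e',e} with e' = (w,u), e = (u,v)
                    for an edge e out of a non-source node u;
   - Dc t v w     : the decoding matrix B_e used by terminal t, for the
                    demanded message v, on its incoming edge e = (w,t).
   For every choice of messages x, the edge signals y (uniquely determined
   by the local equations, the network being acyclic) satisfy the decoding
   equations. *)
Definition vlnc_solution (N : network) (F : fieldType) (d : nat) : Prop :=
  exists (A : node N -> node N -> 'M[F]_d)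
         (C : node N -> node N -> node N -> 'M[F]_d)
         (Dc : node N -> node N -> node N -> 'M[F]_d),
  forall x : node N -> 'cV[F]_d,
  exists y : node N -> node N -> 'cV[F]_d,
    (forall u v, edge N u v ->
       y u v = if source N u then A u v *m x u
               else \sum_(w <- nodes N | edge N w u) C w u v *m y w u)
    /\ (forall t v, demand N t v ->
       \sum_(w <- nodes N | edge N w t) Dc t v w *m y w t = x v).

(* Nodes: SY = s = y (identified), X i = x_i (X 1 = x_1 = a),          *)
(* Mi i = m_i, Ni i = n_i, R i = r_i, Bs = b, Xs = x (M-network),      *)
(* U1, U2, V i = v_i, T j = t_j.  Out-of-range indices are not nodes.  *)
Inductive n1node :=
  SY | X of nat | Mi of nat | Ni of nat | R of nat
| Bs | Xs | U1 | U2 | V of nat | T of nat.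

Definition n1enc (a : n1node) : nat * nat :=
  match a with
  | SY => (0, 0)%N | X i => (1, i)%N | Mi i => (2, i)%N | Ni i => (3, i)%N
  | R i => (4, i)%N | Bs => (5, 0)%N | Xs => (6, 0)%N | U1 => (7, 0)%N
  | U2 => (8, 0)%N | V i => (9, i)%N | T i => (10, i)%N
  end.
Definition n1dec (p : nat * nat) : option n1node :=
  match p with
  | (0, 0)%N => Some SY | (1, i)%N => Some (X i) | (2, i)%N => Some (Mi i)
  | (3, i)%N => Some (Ni i) | (4, i)%N => Some (R i) | (5, 0)%N => Some Bs
  | (6, 0)%N => Some Xs | (7, 0)%N => Some U1 | (8, 0)%N => Some U2
  | (9, i)%N => Some (V i) | (10, i)%N => Some (T i) | _ => None
  end.
Lemma n1encK : pcancel n1enc n1dec. Proof. by case. Qed.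
HB.instance Definition _ := Equality.copy n1node (pcan_type n1encK).

Local Open Scope nat_scope.

Definition N1_nodes (q : nat) : seq n1node :=
  [:: SY] ++ map X (iota 1 (q + 2)) ++ map Mi (iota 1 (q + 3))
  ++ map Ni (iota 1 (q + 3)) ++ map R (iota 1 (q + 3))
  ++ [:: Bs; Xs; U1; U2] ++ map V (iota 1 3) ++ map T (iota 1 4).

Definition N1_source (q : nat) (u : n1node) : bool :=
  match u with
  | SY | Bs | Xs => true
  | X i => (1 <= i <= q + 2)
  | _ => false
  end.

Definition N1_edge (q : nat) (u v : n1node) : bool :=
  match u, v with
  (* Char-q-s part (x_1 = a, s = y) *)
  | X i, Mi j => [&& i == 1 & 1 <= j <= q + 1]
                 || [&& 2 <= i <= q + 2, 2 <= j <= q + 2 & i != j]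
                 || [&& 1 <= i <= q + 2 & j == q + 3]
  | SY, Mi j => (j == 1) || (4 <= j <= q + 3)
  | Mi i, Ni j => [&& i == j & 1 <= i <= q + 3]
  | Ni i, R j => [&& i == j & 1 <= i <= q + 2]
                 || [&& i == q + 3 & 1 <= j <= q + 2]
                 || [&& 1 <= i <= q + 2 & j == q + 3]
  | X i, R j => [&& 2 <= i <= q + 1 & j == 1] || [&& i == 1 & j == q + 2]
  | SY, R j => (j == 2) || (j == 3)
  (* M-network part (a = X 1, y = SY) *)
  | X i, U1 => i == 1
  | Bs, U1 => true
  | Xs, U2 => true
  | SY, U2 => true
  | U1, V i => (i == 1) || (i == 3)
  | U2, V i => (i == 2) || (i == 3)
  | V i, T j => [&& 1 <= i <= 3 & 1 <= j <= 4]
  (* the new edge (n_1, t_4) *)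
  | Ni i, T j => [&& i == 1 & j == 4]
  | _, _ => false
  end.

(* demand t v : terminal t demands the message of source v *)
Definition N1_demand (q : nat) (t v : n1node) : bool :=
  match t, v with
  | R i, X j => [&& i == 1 & j == q + 2]
                || [&& 2 <= i <= q + 2 & j == i]
                || [&& i == q + 3 & j == 1]
  | T 1, X 1 => true | T 1, Xs => true
  | T 2, X 1 => true | T 2, SY => true
  | T 3, Bs => true  | T 3, Xs => true
  | T 4, Bs => true  | T 4, SY => true
  | _, _ => false
  end.

Definition N1 (q : nat) : network :=
  @Network n1node (N1_nodes q) (N1_source q) (N1_edge q) (N1_demand q).

(* Write d = k + k and split every message into a top and a bottom half.

   On the Char-q-s part the code ignores s: every edge out of m_j carries the
   sum e_j of the messages x_i entering m_j, and n_j forwards it.  Terminal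
   r_{q+3} reads x_1 = e_1; for j <= q + 2, the messages entering m_{q+3} are
   split into the one r_j demands, those entering m_j and those r_j receives
   directly, so r_j decodes e_{q+3} - e_j - (its direct messages).

   On the M-network part u_1 sends (top a, bottom b) to v_1 and (top b, bottom a)
   to v_3, and u_2 sends (top x, bottom y) to v_2 and (top y, bottom x) to v_3.
   Each t_j gets one half of each of its two demands from v_1 or v_2, and v_3
   has room to forward both missing halves. *)

From mathcomp Require Import all_boot all_order all_algebra.
From mathcomp Require Import zify.
Set Implicit Arguments. Unset Strict Implicit. Unset Printing Implicit Defensive.
Import GRing.Theory.
Local Open Scope ring_scope.

Lemma big_seq_pred1 (M : nmodType) (I : eqType) (s : seq I) (t : I)
    (P : pred I) (G : I -> M) :
  uniq s -> t \in s -> {in s, P =1 pred1 t} -> \sum_(i <- s | P i) G i = G t.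
Proof.
move=> s_uniq st P_t; rewrite -big_filter (eq_in_filter P_t).
by rewrite filter_pred1_uniq // big_seq1.
Qed.

Lemma big_seq_if_eq (M : nmodType) (I : eqType) (s : seq I) (t : I) (G : I -> M) :
  uniq s -> t \in s -> \sum_(i <- s) (if i == t then G i else 0) = G t.
Proof. by move=> s_uniq st; rewrite -big_mkcond (big_seq_pred1 _ s_uniq st). Qed.

Lemma big_N1_nodes (M : nmodType) q (P : pred n1node) (G : n1node -> M) :
  \sum_(w <- N1_nodes q | P w) G w =
  \sum_(w <- [:: SY] | P w) G w +
  \sum_(i <- iota 1 (q + 2) | P (X i)) G (X i) +
  \sum_(i <- iota 1 (q + 3) | P (Mi i)) G (Mi i) +
  \sum_(i <- iota 1 (q + 3) | P (Ni i)) G (Ni i) +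
  \sum_(i <- iota 1 (q + 3) | P (R i)) G (R i) +
  \sum_(w <- [:: Bs; Xs; U1; U2] | P w) G w +
  \sum_(i <- iota 1 3 | P (V i)) G (V i) +
  \sum_(i <- iota 1 4 | P (T i)) G (T i).
Proof. by rewrite /N1_nodes !big_cat !big_map /= !addrA. Qed.

Section Halves.
Variables (F : fieldType) (k : nat).
Implicit Types u v w : 'cV[F]_(k + k).

Definition keep_top : 'M[F]_(k + k) := block_mx 1%:M 0 0 0.
Definition keep_bot : 'M[F]_(k + k) := block_mx 0 0 0 1%:M.
Definition top_to_bot : 'M[F]_(k + k) := block_mx 0 0 1%:M 0.
Definition bot_to_top : 'M[F]_(k + k) := block_mx 0 1%:M 0 0.

Lemma mul_keep_top v : keep_top *m v = col_mx (usubmx v) 0.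
Proof. by rewrite -{1}[v]vsubmxK mul_block_col !mul1mx !mul0mx !addr0. Qed.

Lemma mul_keep_bot v : keep_bot *m v = col_mx 0 (dsubmx v).
Proof. by rewrite -{1}[v]vsubmxK mul_block_col !mul1mx !mul0mx !add0r. Qed.

Lemma mul_top_to_bot v : top_to_bot *m v = col_mx 0 (usubmx v).
Proof. by rewrite -{1}[v]vsubmxK mul_block_col !mul1mx !mul0mx !addr0. Qed.

Lemma mul_bot_to_top v : bot_to_top *m v = col_mx (dsubmx v) 0.
Proof. by rewrite -{1}[v]vsubmxK mul_block_col !mul1mx !mul0mx add0r addr0. Qed.

Definition interleave u w := keep_top *m u + keep_bot *m w.

Lemma interleaveE u w : interleave u w = col_mx (usubmx u) (dsubmx w).
Proof. by rewrite /interleave mul_keep_top mul_keep_bot add_col_mx addr0 add0r. Qed.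

End Halves.

Arguments keep_top {F} k.
Arguments keep_bot {F} k.
Arguments top_to_bot {F} k.
Arguments bot_to_top {F} k.

Section Code.
Variables (F : fieldType) (k q : nat).
Local Notation vec := 'cV[F]_(k + k).
Local Notation mat := 'M[F]_(k + k).

(* v_3 sends to t_1, ..., t_4 respectively (bottom x, bottom a), (top y, bottom a),
   (top b, bottom x) and (top b, top y). *)
Definition v3_from_u1 (j : nat) : mat :=
  match j with 1%N | 2%N => keep_bot k | _ => keep_top k end.
Definition v3_from_u2 (j : nat) : mat :=
  match j with 1%N => bot_to_top k | 2%N => keep_top k | 3%N => keep_bot k
  | _ => top_to_bot k end.

Definition coef (w u v : n1node) : mat :=
  match u with
  | Mi _ => if w is X _ then 1%:M else 0
  | Ni _ => 1%:M
  | U1 => if w is X _ then (if v == V 1 then keep_top k else keep_bot k)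
          else (if v == V 1 then keep_bot k else keep_top k)
  | U2 => if w is Xs then (if v == V 2 then keep_top k else keep_bot k)
          else (if v == V 2 then keep_bot k else keep_top k)
  | V 3 => if v is T j then (if w is U1 then v3_from_u1 j else v3_from_u2 j) else 0
  | V _ => 1%:M
  | _ => 0
  end.

Definition t_decoder (j : nat) (v : n1node) (i : nat) : mat :=
  match v, i with
  | X _, 1%N => keep_top k | X _, 3%N => keep_bot k
  | Bs, 1%N => keep_bot k | Bs, 3%N => keep_top k
  | Xs, 2%N => keep_top k | Xs, 3%N => if j == 1%N then top_to_bot k else keep_bot k
  | SY, 2%N => keep_bot k | SY, 3%N => if j == 2%N then keep_top k else bot_to_top k
  | _, _ => 0
  end.

Definition decoder (t v w : n1node) : mat :=
  match t, w with
  | R j, Ni i => if j == (q + 3)%N then (if i == 1%N then 1%:M else 0)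
                 else if i == (q + 3)%N then 1%:M else if i == j then - 1%:M else 0
  | R _, X _ => - 1%:M
  | T j, V i => t_decoder j v i
  | _, _ => 0
  end.

Variable x : n1node -> vec.

Definition x_into (j : nat) : vec :=
  \sum_(i <- iota 1 (q + 2) | N1_edge q (X i) (Mi j)) x (X i).

Definition signal (u v : n1node) : vec :=
  match u with
  | SY | X _ | Bs | Xs => x u
  | Mi j | Ni j => x_into j
  | U1 => if v == V 1 then interleave (x (X 1)) (x Bs) else interleave (x Bs) (x (X 1))
  | U2 => if v == V 2 then interleave (x Xs) (x SY) else interleave (x SY) (x Xs)
  | V 1 => interleave (x (X 1)) (x Bs)
  | V 2 => interleave (x Xs) (x SY)
  | V _ => if v is T j then v3_from_u1 j *m interleave (x Bs) (x (X 1))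
                            + v3_from_u2 j *m interleave (x SY) (x Xs)
           else 0
  | _ => 0
  end.

Lemma signal_local u v : N1_edge q u v ->
  signal u v = if N1_source q u then 1%:M *m x u
    else \sum_(w <- N1_nodes q | N1_edge q w u) coef w u v *m signal w u.
Proof.
case: u => [|i|j|j|j| | | | |j|j] //= uv; rewrite ?mul1mx //.
- by have -> : (0 < i <= q + 2)%N by case: v uv => //= *; lia.
- rewrite /x_into big_N1_nodes /= !big_cons !big_nil /= !big_pred0_eq.
  rewrite mul0mx !addr0 (if_same _ (0 : vec)) add0r.
  by apply: eq_bigr => i _; rewrite mul1mx.
- have j_node : (0 < j <= q + 3)%N by case: v uv => //= *; lia.
  rewrite big_N1_nodes /= !big_cons !big_nil /= !big_pred0_eq !addr0 !add0r.
  rewrite (@big_seq_pred1 _ _ _ j) ?mul1mx ?iota_uniq ?mem_iota //.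
  by move=> i _ /=; case: eqP => // ->; lia.
- case: v uv => //= i uv.
  rewrite big_N1_nodes /= !big_cons !big_nil /= !big_pred0_eq !addr0 !add0r.
  rewrite (@big_seq_pred1 _ _ _ 1%N) ?iota_uniq ?mem_iota //; last lia.
  by case/orP: uv => /eqP -> /=; rewrite /interleave // addrC.
- case: v uv => //= i uv.
  rewrite big_N1_nodes /= !big_cons !big_nil /= !big_pred0_eq !addr0.
  by case/orP: uv => /eqP -> /=; rewrite /interleave // addrC.
- case: v uv => //= i uv.
  rewrite big_N1_nodes /= !big_cons !big_nil /= !big_pred0_eq !addr0 !add0r.
  have : [|| j == 1%N, j == 2%N | j == 3%N] by lia.
  by case/or3P => /eqP -> /=; rewrite ?mul1mx ?addr0 ?add0r.
Qed.

Definition decoded (t v : n1node) : vec :=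
  \sum_(w <- N1_nodes q | N1_edge q w t) decoder t v w *m signal w t.

Lemma decoded_T j v : N1_demand q (T j) v -> decoded (T j) v = x v.
Proof.
move=> jv; rewrite /decoded big_N1_nodes /= !big_cons !big_nil /= !big_pred0_eq.
rewrite big1 => [|i _]; last exact: mul0mx.
move: jv; case: j => [|[|[|[|[|j]]]]] //=; case: v => //=.
all: try (case=> [|[|i]] //=); move=> _.
all: rewrite !interleaveE ?mul_keep_top ?mul_keep_bot ?mul_top_to_bot ?mul_bot_to_top.
all: by rewrite !(mul0mx, addr0, add0r, add_col_mx, col_mxKu, col_mxKd) vsubmxK.
Qed.

Lemma x_into_1 : x_into 1 = x (X 1).
Proof.
rewrite /x_into (@big_seq_pred1 _ _ _ 1%N) ?iota_uniq ?mem_iota //; first lia.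
by move=> i _ /=; lia.
Qed.

Lemma decoded_R_last v : (0 < q)%N -> N1_demand q (R (q + 3)) v ->
  decoded (R (q + 3)) v = x v.
Proof.
move=> q_gt0; case: v => //= i vi; have -> : i = 1%N by lia.
rewrite /decoded big_N1_nodes /= !big_cons !big_nil /= !big_pred0_eq eqxx.
have -> : ((q + 3)%N == 2%N) || ((q + 3)%N == 3%N) = false by apply/negbTE; lia.
rewrite big_pred0 => [|i0]; last lia.
rewrite !addr0 !add0r big_mkcond -x_into_1.
rewrite -(@big_seq_if_eq _ _ (iota 1 (q + 3)) 1%N x_into).
- apply: eq_big_seq => i0; rewrite mem_iota => i0_range.
  by do ![case: ifP => ?]; rewrite ?mul1mx ?mul0mx //; exfalso; lia.
- exact: iota_uniq.
- by rewrite mem_iota; lia.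
Qed.

Lemma decoded_R_combination j v : (0 < j <= q + 2)%N ->
  decoded (R j) v = x_into (q + 3) - x_into j
                    - \sum_(i <- iota 1 (q + 2) | N1_edge q (X i) (R j)) x (X i).
Proof.
move=> j_range; rewrite /decoded big_N1_nodes /= !big_cons !big_nil /= !big_pred0_eq.
rewrite mul0mx !addr0 (if_same _ (0 : vec)) add0r.
rewrite (eq_bigr (fun i => - x (X i))) => [|i _]; last by rewrite mulNmx mul1mx.
rewrite sumrN addrC; congr (_ - _).
rewrite big_mkcond (eq_big_seq (fun i => (if i == (q + 3)%N then x_into i else 0)
                                      - (if i == j then x_into i else 0))).
  by rewrite sumrB !big_seq_if_eq ?iota_uniq ?mem_iota //; lia.
move=> i; rewrite mem_iota => i_range.
do ![case: ifP => ?]; rewrite ?mulNmx ?mul1mx ?mul0mx ?subr0 ?sub0r ?subrr //.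
all: by exfalso; lia.
Qed.

Lemma last_mix_partition (M : nmodType) (a : M) i j j' :
  (0 < i <= q + 2)%N -> (0 < j <= q + 2)%N -> N1_demand q (R j) (X j') ->
  (if N1_edge q (X i) (Mi (q + 3)) then a else 0) =
  (if i == j' then a else 0) + (if N1_edge q (X i) (R j) then a else 0)
    + (if N1_edge q (X i) (Mi j) then a else 0).
Proof.
move=> /= i_range j_range jj'.
by do ![case: ifP => ?]; rewrite ?addr0 ?add0r //; exfalso; lia.
Qed.

Lemma decoded_R j v : (0 < q)%N -> N1_demand q (R j) v -> decoded (R j) v = x v.
Proof.
move=> q_gt0 jv; have [j_last|j_ne] := eqVneq j (q + 3).
  by rewrite j_last in jv *; exact: decoded_R_last.
case: v jv => // j' jv; have j_range : (0 < j <= q + 2)%N by move: jv => /=; lia.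
rewrite decoded_R_combination // /x_into; apply/eqP; rewrite !subr_eq; apply/eqP.
rewrite [LHS]big_mkcond (eq_big_seq (fun i => (if i == j' then x (X i) else 0)
    + (if N1_edge q (X i) (R j) then x (X i) else 0)
    + (if N1_edge q (X i) (Mi j) then x (X i) else 0))).
  rewrite !big_split /= big_seq_if_eq ?iota_uniq ?mem_iota //.
  - by congr (_ + _ + _); rewrite [RHS]big_mkcond.
  - by move: jv => /=; lia.
by move=> i; rewrite mem_iota => i_range; apply: last_mix_partition => //; lia.
Qed.

End Code.

Lemma N1_vlnc_double (F : fieldType) q k :
  (0 < q)%N -> vlnc_solution (N1 q) F (k + k).
Proof.
move=> q_gt0; exists (fun _ _ => 1%:M), (@coef F k), (@decoder F k q) => x.
exists (signal q x); split=> [u v|t v]; first exact: signal_local.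
by case: t => // j; [exact: decoded_R | exact: decoded_T].
Qed.

Theorem lemma7 (q d : nat) :
  (2 <= q)%N -> (0 < d)%N -> ~~ odd d ->
  forall F : finFieldType, vlnc_solution (N1 q) F d.
Proof.
move=> q_ge2 _ d_even F.
have -> : d = (d./2 + d./2)%N by rewrite addnn -[LHS]odd_double_half (negbTE d_even).
by apply: N1_vlnc_double; lia.
Qed.
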